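(* The dynamical system $(X,T)$ is topologically mixing: for any nonempty open sets $U,V\subset X$ there is $N$ such that $T^n(U)\cap V\neq\emptyset$ for all $n\geq N$.
   Context: Paths and cycles: a graph is $G=(V,E)$ with $V$ finite and $E\subset V\times V$. A path is a finite sequence of vertices $(u_0,\dots,u_L)$ with $(u_j,u_{j+1})\in E$; its length is $|\cdot|=L$; a cycle is a path with $u_0=u_L$. For paths where one ends where the next starts, $+$ denotes concatenation and $a\,c$ means the cycle $c$ traversed $a$ times. Construction: $G_0=(V_0,E_0)$ with $V_0=\{v_{0,0}\}$, $E_0=\{e_{0,0}\}$, $e_{0,0}=(v_{0,0},v_{0,0})$. For $n\geq1$, $G_n=(V_n,E_n)$ consists of a vertex $v_{n,0}$, the loop $e_{n,0}=(v_{n,0},v_{n,0})$, and $n$ cycles $c_{n,1},\dots,c_{n,n}$, each starting and ending at $v_{n,0}$, whose vertices other than $v_{n,0}$ are pairwise distinct (within each cycle and across cycles); $V_n$ is the set of all these vertices and $E_n$ consists of $e_{n,0}$ and the edges of the cycles. The maps $\varphi_n\colon V_{n+1}\to V_n$ and the lengths of the cycles $c_{n+1,i}$ are defined together: $\varphi_n(v_{n+1,0})=v_{n,0}$, and for each $i$ a path $P_{n,i}$ in $G_n$ from $v_{n,0}$ to $v_{n,0}$ is given; $c_{n+1,i}$ has length $|P_{n,i}|$ and $\varphi_n$ maps its $j$-th vertex to the $j$-th vertex of $P_{n,i}$ (written $\varphi_n(c_{n+1,i})=P_{n,i}$). The paths are: $P_{0,1}=10\,e_{0,0}$; for $n\geq1$: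 $P_{n,i}=e_{n,0}+2c_{n,i}+2c_{n,i+1}+\dots+2c_{n,n}+e_{n,0}$ for $2\leq i\leq n$; $P_{n,n+1}=(n+2)^2\big(\sum_{i=1}^n|c_{n,i}|\big)\,e_{n,0}$; and $P_{n,1}=(1\,e_{n,0}+2c_{n,1})+(2\,e_{n,0}+2c_{n,1})+\dots+(k_n\,e_{n,0}+2c_{n,1})+e_{n,0}+2c_{n,2}+\dots+2c_{n,n}+e_{n,0}$, where $k_n=2\big(1+\sum_{i=1}^n|c_{n,i}|\big)$. Let $X=\{x\in\prod_{n\geq0}V_n:\varphi_n(x_{n+1})=x_n\ \forall n\}$ with metric $d(x,y)=2^{-\min\{i:x_i\neq y_i\}}$ ($d(x,x)=0$); $X$ is a compact zero-dimensional metric space, and $T\colon X\to X$ defined by $T(x)=y$ iff $(x_n,y_n)\in E_n$ for all $n$ is a well-defined homeomorphism. Write $x_n$ for the $n$-th coordinate of $x$. *)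

From mathcomp Require Import all_boot.
Set Implicit Arguments. Unset Strict Implicit. Unset Printing Implicit Defensive.

(* Vertices of every G_n are encoded as pairs of naturals:
   (0,0)  = the base vertex v_{n,0};
   (i,j)  = the j-th vertex (1 <= j <= |c_{n,i}|-1) of the cycle c_{n,i}. *)
Definition vtx := (nat * nat)%type.
Definition base : vtx := (0, 0).

Definition plen (p : seq vtx) : nat := (size p).-1.
(* concatenation p + q of paths, q starting where p ends *)
Definition pcat (p q : seq vtx) : seq vtx := p ++ behead q.
Definition pcats (s : seq (seq vtx)) : seq vtx := foldr pcat [:: base] s.
(* a c = the cycle c (based at base) traversed a times *)
Definition rep (a : nat) (c : seq vtx) : seq vtx := pcats (nseq a c).
Definition eloop : seq vtx := [:: base; base].
Definition cyc (i L : nat) : seq vtx :=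
  base :: rcons [seq (i, j) | j <- iota 1 L.-1] base.

(* lens = [:: |c_{n,1}|; ...; |c_{n,n}|];  cycle c_{n,i} *)
Definition cycof (lens : seq nat) (i : nat) : seq vtx := cyc i (nth 0 lens i.-1).

Definition tail2 (n : nat) (lens : seq nat) (i : nat) : seq vtx :=
  pcats [seq rep 2 (cycof lens j) | j <- iota i (n.+1 - i)].

Definition Ppath (n : nat) (lens : seq nat) (i : nat) : seq vtx :=
  if n is 0 then rep 10 eloop
  else if i == 1 then
    let kn := 2 * (1 + sumn lens) in
    pcats ([seq pcat (rep k eloop) (rep 2 (cycof lens 1)) | k <- iota 1 kn]
           ++ [:: eloop; tail2 n lens 2; eloop])
  else if i <= n then pcats [:: eloop; tail2 n lens i; eloop]
  else (* i = n+1 *) rep ((n + 2) ^ 2 * sumn lens) eloop.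

Fixpoint lens (n : nat) : seq nat :=
  match n with
  | 0 => [::]
  | n'.+1 => [seq plen (Ppath n' (lens n') i) | i <- iota 1 n'.+1]
  end.

Definition valid (n : nat) (v : vtx) : bool :=
  (v == base) || [&& 1 <= v.1 <= n & 1 <= v.2 < nth 0 (lens n) v.1.-1].

Definition pedges (p : seq vtx) : seq (vtx * vtx) := zip p (behead p).
Definition cycles (n : nat) : seq (seq vtx) := [seq cycof (lens n) i | i <- iota 1 n].
Definition edge (n : nat) (u v : vtx) : bool :=
  ((u, v) \in pedges eloop) || has (fun c => (u, v) \in pedges c) (cycles n).

Definition phi (n : nat) (v : vtx) : vtx :=
  if v == base then base else nth base (Ppath n (lens n) v.1) v.2.

Definition point := nat -> vtx.
Definition inX (x : point) : Prop :=
  forall n, valid n (x n) /\ phi n (x n.+1) = x n.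

Definition Trel (x y : point) : Prop := forall n, edge n (x n) (y n).

Fixpoint Tpow (k : nat) (x y : point) : Prop :=
  match k with
  | 0 => x = y
  | k'.+1 => exists z, inX z /\ Trel x z /\ Tpow k' z y
  end.

(* Open subsets of (X,d), d(x,y) = 2^{-min{i : x_i <> y_i}}.
   The open d-ball of radius 2^{-k} about x is {y in X | y_i = x_i for all i <= k},
   and these radii are cofinal among eps > 0, so U is open iff: *)
Definition openX (U : point -> Prop) : Prop :=
  (forall x, U x -> inX x) /\
  (forall x, U x -> exists k, forall y, inX y ->
       (forall i, i <= k -> y i = x i) -> U y).

From mathcomp Require Import all_boot zify.
Set Implicit Arguments. Unset Strict Implicit. Unset Printing Implicit Defensive.

(* Since [P_{m,1}] begins with [e_{m,0} + 2 c_{m,1}], [phi_m] maps the vertex at position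
   [x + 1] of [c_{m+1,1}] to the vertex at position [x] of [c_{m,1}]. Hence, for [q] a
   position on [c_{M,1}], the sequence whose [m]-th coordinate ([m >= M]) is the vertex at
   position [q + m - M] of [c_{m,1}] is a point of [X], and [T] moves it to [q + 1].
   Every vertex of [G_K] occurs in [P_{K,1}], hence on [c_{K+1,1}]. Suppose positions [a]
   and [b] of [c_{j,1}] lie over [u] and [v] in [G_K]. In [P_{j,1}], the copy of [a] in
   the second [c_{j,1}] of the block [s e_{j,0} + 2 c_{j,1}] and the copy of [b] in the
   first [c_{j,1}] of the next block are [g + s + 1] apart, where [g = |c_{j,1}| - a + b];
   so every time in [[g + 2, g + k_j]] carries a vertex over [u] to one over [v]. Taking
   [a] in the last block and [b] in the first one yields such a pair on [c_{j+1,1}] whose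
   [g] grows by [2 (|c_{j,2}| + ... + |c_{j,j}|) + 3 <= k_j - 1], so these intervals of
   times cover everything from [g + 2] on. *)

Lemma iota_cons_mid m n k : k < n -> iota m n = iota m k ++ (m + k) :: iota (m + k).+1 (n - k.+1).
Proof.
move=> kn; rewrite -{1}(subnKC (ltnW kn)) iotaD.
by have -> : n - k = (n - k.+1).+1 by lia.
Qed.

Definition based (p : seq vtx) : bool :=
  if p is x :: s then (x == base) && (last x s == base) else false.

Lemma basedP p : based p -> exists2 s, p = base :: s & last base s = base.
Proof. by case: p => [|x s] //= /andP[/eqP -> /eqP]; exists s. Qed.

Lemma all_based_map (T : Type) (f : T -> seq vtx) s :
  (forall x, based (f x)) -> all based (map f s).
Proof. by move=> fb; elim: s => //= x s ->; rewrite fb. Qed.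

Lemma based_pcat p q : based p -> based q -> based (pcat p q).
Proof. by move=> /basedP[s -> ps] /basedP[t -> qt]; rewrite /= last_cat ps qt eqxx. Qed.

Lemma plen_pcat p q : based p -> based q -> plen (pcat p q) = plen p + plen q.
Proof. by move=> /basedP[s -> _] /basedP[t -> _]; rewrite /pcat /plen /= size_cat. Qed.

Lemma nth_pcatl p q x : based p -> x <= plen p -> nth base (pcat p q) x = nth base p x.
Proof. by move=> /basedP[s -> _] xs; rewrite /pcat nth_cat ltnS xs. Qed.

Lemma nth_pcatr p q x :
  based p -> based q -> nth base (pcat p q) (plen p + x) = nth base q x.
Proof.
move=> /basedP[s -> ps] /basedP[t -> _]; rewrite /pcat /plen nth_cat /=.
case: x => [|x]; last by rewrite ifF ?addnS ?subSS ?addKn //; lia.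
by rewrite addn0 ltnSn; move: (nth_last base (base :: s)); rewrite /= ps.
Qed.

Lemma pcatA p q r : based q -> pcat p (pcat q r) = pcat (pcat p q) r.
Proof. by move=> /basedP[s -> _]; rewrite /pcat /= catA. Qed.

Lemma pcat1p p : based p -> pcat [:: base] p = p.
Proof. by move=> /basedP[s -> _]. Qed.

Lemma pcatp1 p : pcat p [:: base] = p.
Proof. by rewrite /pcat cats0. Qed.

Lemma based_pcats s : all based s -> based (pcats s).
Proof. by elim: s => //= p s IHs /andP[bp /IHs]; apply: based_pcat. Qed.

Lemma plen_pcats s : all based s -> plen (pcats s) = sumn (map plen s).
Proof.
elim: s => //= p s IHs /andP[bp bs].
by rewrite plen_pcat ?IHs ?based_pcats.
Qed.

Lemma pcats_cat s1 s2 : all based s1 -> all based s2 ->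
  pcats (s1 ++ s2) = pcat (pcats s1) (pcats s2).
Proof.
move=> + bs2; elim: s1 => [|p s IHs] /=; first by rewrite pcat1p ?based_pcats.
by case/andP=> bp bs; rewrite IHs // pcatA ?based_pcats.
Qed.

Lemma nth_pcats_cat s1 p s2 x : all based s1 -> based p -> all based s2 -> x <= plen p ->
  nth base (pcats (s1 ++ p :: s2)) (plen (pcats s1) + x) = nth base p x.
Proof.
move=> bs1 bp bs2 xp; rewrite pcats_cat //= ?bp // nth_pcatr ?based_pcats //=.
  by rewrite nth_pcatl.
by rewrite based_pcat ?based_pcats.
Qed.

Lemma all_based_nseq a p : based p -> all based (nseq a p).
Proof. by move=> bp; rewrite all_nseq bp orbT. Qed.

Lemma based_rep a p : based p -> based (rep a p).
Proof. by move=> bp; rewrite based_pcats ?all_based_nseq. Qed.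

Lemma plen_rep a p : based p -> plen (rep a p) = a * plen p.
Proof.
move=> bp; rewrite plen_pcats ?all_based_nseq // map_nseq.
by elim: a => //= a ->; rewrite mulSn.
Qed.

Lemma rep2 p : rep 2 p = pcat p p.
Proof. by rewrite /rep /= pcatp1. Qed.

Lemma nth_rep2 p x : based p -> x <= plen p -> nth base (rep 2 p) x = nth base p x.
Proof. by move=> bp xp; rewrite rep2 nth_pcatl. Qed.

Lemma nth_rep2_plen p x : based p -> nth base (rep 2 p) (plen p + x) = nth base p x.
Proof. by move=> bp; rewrite rep2 nth_pcatr. Qed.

Lemma nth0_based p : based p -> nth base p 0 = base.
Proof. by move=> /basedP[s -> _]. Qed.

Lemma nth_plen_based p : based p -> nth base p (plen p) = base.
Proof. by move=> /basedP[s -> ps]; rewrite /plen nth_last /= ps. Qed.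

Lemma based_eloop : based eloop. Proof. by []. Qed.

Lemma plen_eloop : plen eloop = 1. Proof. by []. Qed.

Lemma nth_cyc i L j : 0 < L ->
  nth base (cyc i L) j = if 0 < j < L then (i, j) else base.
Proof.
move=> L_gt0; case: j => [|j] //=; rewrite nth_rcons size_map size_iota.
case: ltnP => [jL|Lj]; last by rewrite if_same ifF //; lia.
by rewrite (nth_map 0) ?size_iota // nth_iota // ifT //; lia.
Qed.

Lemma plen_cyc i L : 0 < L -> plen (cyc i L) = L.
Proof. by move=> L_gt0; rewrite /plen /= size_rcons size_map size_iota; lia. Qed.

Lemma based_cycof l i : based (cycof l i).
Proof. by rewrite /= last_rcons eqxx. Qed.

Lemma based_tail2 n l i : based (tail2 n l i).
Proof. by apply/based_pcats/all_based_map => j; apply/based_rep/based_cycof. Qed.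

Definition block l k : seq vtx := pcat (rep k eloop) (rep 2 (cycof l 1)).
Definition nblocks (l : seq nat) : nat := 2 * (1 + sumn l).
Definition frame n l i : seq (seq vtx) := [:: eloop; tail2 n l i; eloop].

Lemma Ppath1E n l :
  Ppath n.+1 l 1 = pcats ([seq block l k | k <- iota 1 (nblocks l)] ++ frame n.+1 l 2).
Proof. by []. Qed.

Lemma PpathE n l i : i != 1 -> i <= n.+1 -> Ppath n.+1 l i = pcats (frame n.+1 l i).
Proof. by rewrite /Ppath => /negbTE -> ->. Qed.

Lemma PpathE_last n l i : n.+1 < i -> Ppath n.+1 l i = rep ((n.+1 + 2) ^ 2 * sumn l) eloop.
Proof. by move=> lt_i; rewrite /Ppath !ifF //; lia. Qed.

Lemma based_block l k : based (block l k).
Proof. by rewrite based_pcat ?based_rep ?based_cycof. Qed.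

Lemma all_based_blocks l s : all based [seq block l k | k <- s].
Proof. exact/all_based_map/based_block. Qed.

Lemma all_based_frame n l i : all based (frame n l i).
Proof. by rewrite /= based_tail2. Qed.

Lemma plen_frame n l i : plen (pcats (frame n l i)) = plen (tail2 n l i) + 2.
Proof. by rewrite plen_pcats ?all_based_frame //= plen_eloop; lia. Qed.

Lemma based_Ppath n l i : based (Ppath n l i).
Proof.
case: n => [|n]; first exact: based_rep.
have [i1|i_neq1] := eqVneq i 1.
  by rewrite i1 Ppath1E based_pcats // all_cat all_based_blocks all_based_frame.
case: (leqP i n.+1) => i_le; first by rewrite PpathE ?based_pcats ?all_based_frame.
by rewrite PpathE_last ?based_rep.
Qed.

Lemma nblocks_gt0 l : 0 < nblocks l.
Proof. by rewrite /nblocks; lia. Qed.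

Lemma plen_block l k : plen (block l k) = k + 2 * plen (cycof l 1).
Proof. by rewrite plen_pcat ?plen_rep ?based_rep ?based_cycof // plen_eloop muln1. Qed.

Lemma plen_blocks l s :
  plen (pcats [seq block l k | k <- s]) = sumn [seq k + 2 * plen (cycof l 1) | k <- s].
Proof. by rewrite plen_pcats ?all_based_blocks // -map_comp; apply/congr1/eq_map/plen_block. Qed.

(* [cyc_off l s] is the position in [P_{n+1,1}] where the copy of [2 c_{n,1}] in the
   [s]-th block [s e_{n,0} + 2 c_{n,1}] begins. *)
Definition cyc_off l s := plen (pcats [seq block l k | k <- iota 1 s.-1]) + s.

Lemma cyc_off1 l : cyc_off l 1 = 1.
Proof. by []. Qed.

Lemma cyc_offS l s : 0 < s -> cyc_off l s.+1 = cyc_off l s + s + 1 + 2 * plen (cycof l 1).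
Proof.
case: s => // s _; rewrite /cyc_off !plen_blocks !succnK.
have -> : iota 1 s.+1 = iota 1 s ++ [:: s.+1] by rewrite -(addn1 s) iotaD add1n addn1.
by rewrite map_cat sumn_cat /=; lia.
Qed.

Lemma cyc_off_mono l s t : 0 < s <= t -> cyc_off l s + (t - s) <= cyc_off l t.
Proof.
case/andP=> s_gt0; elim: t => [|t IHt]; first by rewrite leqn0 => /eqP->; lia.
rewrite leq_eqVlt => /orP[/eqP <-|]; first by rewrite subnn addn0.
by rewrite ltnS => st; rewrite cyc_offS ?(leq_trans s_gt0 st) //; move/IHt: st; lia.
Qed.

Lemma plen_all_blocks l : plen (pcats [seq block l k | k <- iota 1 (nblocks l)]) =
  cyc_off l (nblocks l) + 2 * plen (cycof l 1).
Proof. by have := cyc_offS l (nblocks_gt0 l); rewrite {1}/cyc_off succnK; lia. Qed.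

Lemma plen_Ppath1 n l : plen (Ppath n.+1 l 1) =
  cyc_off l (nblocks l) + 2 * plen (cycof l 1) + plen (tail2 n.+1 l 2) + 2.
Proof.
rewrite Ppath1E pcats_cat ?all_based_blocks ?all_based_frame //.
rewrite plen_pcat ?based_pcats ?all_based_blocks ?all_based_frame //.
by rewrite plen_frame plen_all_blocks; lia.
Qed.

Lemma nth_Ppath1_block n l s x : 0 < s <= nblocks l -> x <= 2 * plen (cycof l 1) ->
  nth base (Ppath n.+1 l 1) (cyc_off l s + x) = nth base (rep 2 (cycof l 1)) x.
Proof.
case: s => // s s_le x_le; rewrite Ppath1E (@iota_cons_mid 1 _ s) ?add1n; last lia.
rewrite map_cat -catA /= /cyc_off succnK -addnA.
have -> : s.+1 + x = plen (rep s.+1 eloop) + x by rewrite plen_rep // plen_eloop muln1.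
rewrite nth_pcats_cat ?all_cat ?all_based_blocks ?based_block ?all_based_frame //.
  by rewrite nth_pcatr ?based_rep ?based_cycof.
by rewrite plen_block plen_rep // plen_eloop; lia.
Qed.

Lemma nth_Ppath1_tail n l y : y <= plen (tail2 n.+1 l 2) ->
  nth base (Ppath n.+1 l 1) (cyc_off l (nblocks l) + 2 * plen (cycof l 1) + (1 + y))
  = nth base (tail2 n.+1 l 2) y.
Proof.
move=> y_le; rewrite Ppath1E pcats_cat ?all_based_blocks ?all_based_frame //.
rewrite -plen_all_blocks nth_pcatr ?based_pcats ?all_based_blocks ?all_based_frame //.
change (pcats _) with (pcat eloop (pcats [:: tail2 n.+1 l 2; eloop])).
rewrite -[1 + y]/(plen eloop + y) nth_pcatr ?based_pcats /= ?based_tail2 //.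
by rewrite nth_pcatl ?based_tail2.
Qed.

Lemma tail2_cycof N l i p : 2 <= i <= N -> p <= plen (cycof l i) ->
  exists2 y, y <= plen (tail2 N l 2) & nth base (tail2 N l 2) y = nth base (cycof l i) p.
Proof.
move=> iN p_le; rewrite /tail2 (@iota_cons_mid 2 _ (i - 2)) ?subnKC ?map_cat; try lia.
rewrite [map _ (_ :: _)]/=.
set A := map _ (iota 2 _); set B := map _ (iota _.+1 _).
have bA : all based A by apply/all_based_map => j; apply/based_rep/based_cycof.
have bB : all based B by apply/all_based_map => j; apply/based_rep/based_cycof.
have bc : based (rep 2 (cycof l i)) by apply/based_rep/based_cycof.
have bcB : all based (rep 2 (cycof l i) :: B) by apply/andP.
exists (plen (pcats A) + p).
  rewrite [plen (pcats (_ ++ _))]plen_pcats ?all_cat ?bA //.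
  rewrite map_cat sumn_cat -plen_pcats // leq_add2l.
  apply: leq_trans (leq_addr (sumn (map plen B)) _).
  by rewrite plen_rep ?based_cycof //; lia.
by rewrite nth_pcats_cat ?nth_rep2 ?plen_rep ?based_cycof //; lia.
Qed.

Lemma plen_Ppath_gt0 n l i : (0 < sumn l) || (n == 0) -> 0 < plen (Ppath n l i).
Proof.
case: n => [|n]; first by rewrite /= plen_rep.
rewrite orbF => l_gt0; have [->|i_neq1] := eqVneq i 1; first by rewrite plen_Ppath1; lia.
case: (leqP i n.+1) => i_le; first by rewrite PpathE ?plen_frame; lia.
by rewrite PpathE_last ?plen_rep // plen_eloop muln1 muln_gt0 l_gt0 expn_gt0 addn2.
Qed.

Lemma nth_lens m i : 1 <= i <= m.+1 -> nth 0 (lens m.+1) i.-1 = plen (Ppath m (lens m) i).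
Proof.
move=> im; have -> : lens m.+1 = [seq plen (Ppath m (lens m) i) | i <- iota 1 m.+1] by [].
by rewrite (nth_map 0) ?nth_iota ?size_iota ?add1n ?prednK //; lia.
Qed.

Lemma lens_gt0 m i : 1 <= i <= m -> 0 < nth 0 (lens m) i.-1.
Proof.
elim: m i => [|m IHm] i im; first lia.
rewrite nth_lens // plen_Ppath_gt0 //; case: m IHm {im} => [|m] IHm //.
have := IHm 1 isT; case: (lens m.+1) => //= L s; lia.
Qed.

Lemma plen_cycof m i : 1 <= i <= m -> plen (cycof (lens m) i) = nth 0 (lens m) i.-1.
Proof. by move=> im; rewrite plen_cyc ?lens_gt0. Qed.

Lemma size_lens m : size (lens m) = m.
Proof. by case: m => //= m; rewrite size_map size_iota. Qed.

Lemma plen_tail2_lens m : plen (tail2 m (lens m) 2) = 2 * sumn (behead (lens m)).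
Proof.
rewrite plen_pcats; last by apply/all_based_map => j; apply/based_rep/based_cycof.
have -> : m.+1 - 2 = size (behead (lens m)) by rewrite size_behead size_lens; lia.
rewrite -[in RHS](mkseq_nth 0 (behead _)) /mkseq (iotaDl 2 0) -!map_comp.
rewrite !sumnE !big_map big_distrr; apply: eq_big_seq => k.
rewrite mem_iota size_behead size_lens add0n => k_lt.
by rewrite /comp plen_rep ?based_cycof // plen_cycof ?nth_behead //; lia.
Qed.

Lemma pedgesP p u v : reflect
  (exists2 k, k < plen p & (nth base p k, nth base p k.+1) = (u, v))
  ((u, v) \in pedges p).
Proof.
have size_pedges : size (pedges p) = plen p.
  by rewrite size_zip size_behead (minn_idPr (leq_pred _)).
apply: (iffP (nthP (base, base))); rewrite size_pedges => -[k kp <-];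
  by exists k; rewrite // /pedges nth_zip_cond size_zip size_behead
                        (minn_idPr (leq_pred _)) kp nth_behead.
Qed.

Lemma path_pedges (e : rel vtx) p :
  path e (head base p) (behead p) = all (fun uv => e uv.1 uv.2) (pedges p).
Proof. by case: p => // x s; elim: s x => //= y s IHs x; rewrite IHs. Qed.

Definition walk m (p : seq vtx) : bool :=
  path (edge m) (head base p) (behead p) && all (valid m) p.

Lemma walk_edge m p k : walk m p -> k < plen p ->
  edge m (nth base p k) (nth base p k.+1).
Proof.
case/andP; rewrite path_pedges => /allP walk_p _ kp.
by apply: (walk_p (_, _)); apply/pedgesP; exists k.
Qed.

Lemma walk_pcat m p q :
  based p -> based q -> walk m p -> walk m q -> walk m (pcat p q).
Proof.
move=> /basedP[s -> ps] /basedP[t -> _] /andP[ep vs] /andP[et vt].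
rewrite /walk /= cat_path ep ps et all_cat.
by move: vs vt => /= -> ->.
Qed.

Lemma walk_pcats m s : all based s -> all (walk m) s -> walk m (pcats s).
Proof.
elim: s => //= p s IHs /andP[bp bs] /andP[wp ws].
by rewrite walk_pcat ?based_pcats ?IHs.
Qed.

Lemma walk_rep m a p : based p -> walk m p -> walk m (rep a p).
Proof. by move=> bp wp; rewrite walk_pcats ?all_based_nseq // all_nseq wp orbT. Qed.

Lemma walk_eloop m : walk m eloop.
Proof. by []. Qed.

Lemma walk_cycof m i : 1 <= i <= m -> walk m (cycof (lens m) i).
Proof.
move=> im; apply/andP; split.
  rewrite path_pedges; apply/allP => -[u v] uv; apply/orP; right.
  by apply/hasP; exists (cycof (lens m) i) => //; apply: map_f; rewrite mem_iota; lia.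
rewrite /cycof /cyc /= all_rcons /=; apply/allP => _ /mapP[j + ->].
by rewrite mem_iota /valid /= => j_lt; apply/orP; right; lia.
Qed.

Lemma walk_tail2 m i : 0 < i -> walk m (tail2 m (lens m) i).
Proof.
move=> i_gt0; apply: walk_pcats.
  by apply: all_based_map => j; apply/based_rep/based_cycof.
apply/allP => _ /mapP[j + ->]; rewrite mem_iota => j_lt.
by apply/walk_rep/walk_cycof; [apply: based_cycof | lia].
Qed.

Lemma walk_block m k : 0 < m -> walk m (block (lens m) k).
Proof.
move=> m_gt0; apply: walk_pcat; first exact: based_rep based_eloop.
- exact: based_rep (based_cycof _ _).
- exact: walk_rep based_eloop (walk_eloop _).
- by apply: walk_rep (based_cycof _ _) _; apply: walk_cycof; rewrite m_gt0.
Qed.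

Lemma walk_Ppath m i : 1 <= i <= m.+1 -> walk m (Ppath m (lens m) i).
Proof.
have walk_loops a : walk m (rep a eloop) by apply/walk_rep/walk_eloop.
case: m walk_loops => [|m] walk_loops im; first exact: walk_loops.
have walk_frame j : 0 < j -> all (walk m.+1) (frame m.+1 (lens m.+1) j).
  by move=> j_gt0; apply/allP => p; rewrite !inE => /or3P[] /eqP ->;
     rewrite ?walk_eloop ?walk_tail2.
have [i1|i_neq1] := eqVneq i 1.
  rewrite i1 Ppath1E walk_pcats // ?all_cat ?all_based_blocks ?all_based_frame //.
  by rewrite walk_frame // andbT; apply/allP => _ /mapP[k _ ->]; apply: walk_block.
case: (leqP i m.+1) => i_le; last by rewrite PpathE_last.
by rewrite PpathE ?walk_pcats ?all_based_frame ?walk_frame //; lia.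
Qed.

Lemma phi_cycof m i j : 1 <= i <= m.+1 -> j <= plen (Ppath m (lens m) i) ->
  phi m (nth base (cycof (lens m.+1) i) j) = nth base (Ppath m (lens m) i) j.
Proof.
move=> im jP; have P_gt0 := lens_gt0 im; rewrite nth_lens // in P_gt0.
rewrite /cycof nth_lens // nth_cyc //; case: ifP => [j_mid | j_end].
  by rewrite /phi ifF //; apply/negbTE; rewrite xpair_eqE; lia.
rewrite /phi eqxx; have [->|j_gt0] := posnP j; first by rewrite nth0_based ?based_Ppath.
have -> : j = plen (Ppath m (lens m) i) by lia.
by rewrite nth_plen_based ?based_Ppath.
Qed.

Lemma valid_phi m v : valid m.+1 v -> valid m (phi m v).
Proof.
case/orP=> [/eqP -> | /andP[im jL]]; first by rewrite /phi eqxx.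
have v_neq : v != base by apply/negP => /eqP v0; rewrite v0 in im.
rewrite /phi (negbTE v_neq); have /andP[_ /allP valid_P] := walk_Ppath im.
apply/valid_P/mem_nth; rewrite nth_lens // /plen in jL.
by case/andP: jL => _ /leq_trans; apply; apply: leq_pred.
Qed.

Lemma edge_phi m u v : edge m.+1 u v -> edge m (phi m u) (phi m v).
Proof.
case/orP=> [|/hasP[_ /mapP[i + ->] /pedgesP[k kc [<- <-]]]].
  by rewrite inE => /eqP[-> ->]; rewrite /phi eqxx.
rewrite mem_iota => i_lt; have im : 1 <= i <= m.+1 by lia.
rewrite plen_cycof // nth_lens // in kc.
by rewrite (phi_cycof im (ltnW kc)) (phi_cycof im kc); apply: walk_edge (walk_Ppath im) kc.
Qed.

Definition len1 m : nat := nth 0 (lens m) 0.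
Definition vtx1 m x : vtx := nth base (cycof (lens m) 1) x.

Lemma len1_gt0 m : 0 < m -> 0 < len1 m.
Proof. by move=> m_gt0; apply: (@lens_gt0 m 1); rewrite m_gt0. Qed.

Lemma plen_cycof1 m : 0 < m -> plen (cycof (lens m) 1) = len1 m.
Proof. by move=> m_gt0; rewrite plen_cycof ?m_gt0. Qed.

Lemma len1S m : len1 m.+1 = plen (Ppath m (lens m) 1).
Proof. exact: (@nth_lens m 1). Qed.

Lemma len1S_cyc_off m : 0 < m -> len1 m.+1 =
  cyc_off (lens m) (nblocks (lens m)) + 2 * len1 m + 2 * sumn (behead (lens m)) + 2.
Proof. by case: m => // m _; rewrite len1S plen_Ppath1 plen_tail2_lens plen_cycof1. Qed.

Lemma len1_mono M m : 0 < M <= m -> len1 M + (m - M) <= len1 m.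
Proof.
case/andP=> M_gt0; elim: m => [|m IHm]; first lia.
rewrite leq_eqVlt => /orP[/eqP <-|]; first by rewrite subnn addn0.
rewrite ltnS => Mm; have := IHm Mm; rewrite len1S_cyc_off; lia.
Qed.

Lemma cyc_off_len1 m s : 0 < m -> 0 < s <= nblocks (lens m) ->
  cyc_off (lens m) s + 2 * len1 m <= len1 m.+1.
Proof.
by move=> m_gt0 s_le; have := cyc_off_mono (lens m) s_le; rewrite len1S_cyc_off //; lia.
Qed.

Lemma nth_Ppath1_first m s x : 0 < m -> 0 < s <= nblocks (lens m) -> x <= len1 m ->
  nth base (Ppath m (lens m) 1) (cyc_off (lens m) s + x) = vtx1 m x.
Proof.
case: m => // m _ s_le x_le.
by rewrite nth_Ppath1_block ?nth_rep2 ?based_cycof ?plen_cycof1 //; lia.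
Qed.

Lemma nth_Ppath1_second m s x : 0 < m -> 0 < s <= nblocks (lens m) -> x <= len1 m ->
  nth base (Ppath m (lens m) 1) (cyc_off (lens m) s + (len1 m + x)) = vtx1 m x.
Proof.
case: m => // m _ s_le x_le.
by rewrite nth_Ppath1_block -?plen_cycof1 ?nth_rep2_plen ?based_cycof // plen_cycof1; lia.
Qed.

Lemma valid_vtx1 m x : 0 < m -> x <= len1 m -> valid m (vtx1 m x).
Proof.
move=> m_gt0 x_le; have /andP[_ /allP] := @walk_cycof m 1 (m_gt0); apply.
apply: mem_nth; rewrite -(plen_cycof1 m_gt0) /plen in x_le.
by apply: leq_ltn_trans x_le _; rewrite ltn_predL.
Qed.

Lemma edge_vtx1 m x : 0 < m -> x < len1 m -> edge m (vtx1 m x) (vtx1 m x.+1).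
Proof.
move=> m_gt0 x_lt; apply: walk_edge; first exact: (@walk_cycof m 1).
by rewrite plen_cycof1.
Qed.

Lemma phi_vtx1S m p : p <= len1 m.+1 -> phi m (vtx1 m.+1 p) = nth base (Ppath m (lens m) 1) p.
Proof. by rewrite len1S; apply: phi_cycof. Qed.

Lemma phi_vtx1 m x : 0 < m -> x <= len1 m -> phi m (vtx1 m.+1 x.+1) = vtx1 m x.
Proof.
move=> m_gt0 x_le; have len1_le := @cyc_off_len1 m 1 m_gt0 (nblocks_gt0 _).
have -> : x.+1 = cyc_off (lens m) 1 + x by rewrite cyc_off1.
by rewrite phi_vtx1S ?nth_Ppath1_first ?nblocks_gt0 //; lia.
Qed.

Lemma mem_Ppath1 K u : 0 < K -> valid K u ->
  exists2 a, a <= len1 K.+1 & nth base (Ppath K (lens K) 1) a = u.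
Proof.
move=> K_gt0; case/orP=> [/eqP -> | ]; first by exists 0; rewrite ?nth0_based ?based_Ppath.
case: u => i p /= /andP[iK p_lt]; have cyc_ip : nth base (cycof (lens K) i) p = (i, p).
  by rewrite /cycof nth_cyc ?p_lt //; lia.
have [i1 | i_gt1] := eqVneq i 1.
  rewrite {}i1 -/(len1 K) in p_lt cyc_ip *; exists (cyc_off (lens K) 1 + p).
    by have := @cyc_off_len1 K 1 K_gt0 (nblocks_gt0 _); lia.
  by rewrite nth_Ppath1_first ?nblocks_gt0 //; lia.
case: K K_gt0 iK p_lt cyc_ip => // n _ iK p_lt cyc_ip.
have iN : 2 <= i <= n.+1 by lia.
have p_le : p <= plen (cycof (lens n.+1) i) by rewrite plen_cycof //; lia.
have [y y_le tail_y] := tail2_cycof iN p_le.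
exists (cyc_off (lens n.+1) (nblocks (lens n.+1)) + 2 * plen (cycof (lens n.+1) 1) + (1 + y)).
  by rewrite len1S plen_Ppath1; lia.
by rewrite nth_Ppath1_tail // tail_y.
Qed.

Fixpoint phis (d m : nat) (v : vtx) : vtx :=
  if d is d'.+1 then phi m (phis d' m.+1 v) else v.

Lemma phisS d m v : phis d.+1 m v = phis d m (phi (m + d) v).
Proof.
elim: d m => [|d IHd] m; first by rewrite addn0.
by rewrite -[phis d.+2 m v]/(phi m (phis d.+1 m.+1 v)) IHd addSnnS.
Qed.

Lemma valid_phis d m v : valid (m + d) v -> valid m (phis d m v).
Proof. by elim: d m => [|d IHd] m; rewrite ?addn0 // -addSnnS => /IHd /valid_phi. Qed.

Lemma edge_phis d m u v : edge (m + d) u v -> edge m (phis d m u) (phis d m v).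
Proof. by elim: d m => [|d IHd] m; rewrite ?addn0 // -addSnnS => /IHd /edge_phi. Qed.

Definition pt M q : point := fun m =>
  if M <= m then vtx1 m (q + (m - M)) else phis (M - m) m (vtx1 M q).

Lemma inX_pt M q : 0 < M -> q <= len1 M -> inX (pt M q).
Proof.
move=> M_gt0 q_le n; rewrite /pt; case: (leqP M n) => [Mn | nM].
  have len1_le : len1 M + (n - M) <= len1 n by apply: len1_mono; rewrite M_gt0.
  rewrite ifT; last lia.
  split; first by apply: valid_vtx1; lia.
  by rewrite subSn // addnS phi_vtx1 //; lia.
split; first by apply: valid_phis; rewrite subnKC ?valid_vtx1 //; lia.
case: (leqP M n.+1) => [Mn1 | n1M].
  have eM : M = n.+1 by lia.
  by rewrite eM subnn addn0 subSnn.
by have -> : M - n = (M - n.+1).+1 by lia.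
Qed.

Lemma Trel_pt M q : 0 < M -> q < len1 M -> Trel (pt M q) (pt M q.+1).
Proof.
move=> M_gt0 q_lt n; rewrite /pt; case: (leqP M n) => [Mn | nM].
  have len1_le : len1 M + (n - M) <= len1 n by apply: len1_mono; rewrite M_gt0.
  by rewrite addSn edge_vtx1 //; lia.
by apply: edge_phis; rewrite subnKC ?edge_vtx1 //; lia.
Qed.

Lemma Tpow_pt M q k : 0 < M -> q + k <= len1 M -> Tpow k (pt M q) (pt M (q + k)).
Proof.
move=> M_gt0; elim: k q => [|k IHk] q qk_le; first by rewrite addn0.
exists (pt M q.+1); split; first by apply: inX_pt; lia.
by split; [apply: Trel_pt; lia | rewrite addnS -addSn; apply: IHk; lia].
Qed.

Lemma inX_eq_le x y K i : inX x -> inX y -> x K = y K -> i <= K -> x i = y i.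
Proof.
move=> Xx Xy + iK; rewrite -(subnKC iK); elim: (K - i) => [|d IHd]; first by rewrite addn0.
by rewrite addnS => /(congr1 (phi (i + d))); rewrite (Xx _).2 (Xy _).2; apply: IHd.
Qed.

Definition img K j a : vtx := phis (j - K) K (vtx1 j a).

Lemma imgS K j p : K <= j -> p <= len1 j.+1 ->
  img K j.+1 p = phis (j - K) K (nth base (Ppath j (lens j) 1) p).
Proof. by move=> Kj p_le; rewrite /img subSn // phisS subnKC // phi_vtx1S. Qed.

Lemma img_first K j s x : K < j -> 0 < s <= nblocks (lens j) -> x <= len1 j ->
  img K j.+1 (cyc_off (lens j) s + x) = img K j x.
Proof.
move=> Kj s_le x_le; have len1_le := cyc_off_len1 (leq_ltn_trans (leq0n K) Kj) s_le.
by rewrite imgS ?nth_Ppath1_first //; lia.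
Qed.

Lemma img_second K j s x : K < j -> 0 < s <= nblocks (lens j) -> x <= len1 j ->
  img K j.+1 (cyc_off (lens j) s + (len1 j + x)) = img K j x.
Proof.
move=> Kj s_le x_le; have len1_le := cyc_off_len1 (leq_ltn_trans (leq0n K) Kj) s_le.
by rewrite imgS ?nth_Ppath1_second //; lia.
Qed.

Definition pair_over K u v j a b :=
  [/\ K < j, a <= len1 j, b <= len1 j, img K j a = u & img K j b = v].

Definition gap_realized K u v n := exists M q,
  [/\ K < M, q + n <= len1 M, img K M q = u & img K M (q + n) = v].

Definition gap j a b := len1 j - a + b.

Lemma gap_realized_blocks K u v j a b s : pair_over K u v j a b ->
  0 < s < nblocks (lens j) -> gap_realized K u v (gap j a b + s + 1).
Proof.
case=> Kj a_le b_le img_a img_b s_lt; have j_gt0 : 0 < j by lia.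
have s_le : 0 < s <= nblocks (lens j) by lia.
have s1_le : 0 < s.+1 <= nblocks (lens j) by lia.
have endpoint :
  cyc_off (lens j) s + (len1 j + a) + (gap j a b + s + 1) = cyc_off (lens j) s.+1 + b.
  by rewrite cyc_offS ?plen_cycof1 // /gap; lia.
exists j.+1, (cyc_off (lens j) s + (len1 j + a)); rewrite endpoint; split.
- exact: ltnW.
- by have := cyc_off_len1 j_gt0 s1_le; lia.
- by rewrite img_second.
- by rewrite img_first.
Qed.

Lemma pair_over_next K u v j a b : pair_over K u v j a b -> exists a' b',
  [/\ pair_over K u v j.+1 a' b', gap j a b < gap j.+1 a' b'
    & gap j.+1 a' b' + 1 <= gap j a b + nblocks (lens j)].
Proof.
case=> Kj a_le b_le img_a img_b; have j_gt0 : 0 < j by lia.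
have len1_eq := len1S_cyc_off j_gt0; have len1_pos := len1_gt0 j_gt0.
have N_eq : nblocks (lens j) = 2 * (1 + sumn (lens j)) by [].
have N_le : 0 < nblocks (lens j) <= nblocks (lens j) by rewrite nblocks_gt0 leqnn.
have sum_split : sumn (lens j) = len1 j + sumn (behead (lens j)) by rewrite /len1; case: (lens j).
exists (cyc_off (lens j) (nblocks (lens j)) + (len1 j + a)), (cyc_off (lens j) 1 + b).
split; first split.
- lia.
- lia.
- by rewrite cyc_off1; lia.
- by rewrite img_second.
- by rewrite img_first ?nblocks_gt0.
- by rewrite /gap cyc_off1; lia.
- by rewrite /gap cyc_off1; lia.
Qed.

Lemma gap_realized_from K u v j a b n :
  pair_over K u v j a b -> gap j a b + 2 <= n -> gap_realized K u v n.
Proof.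
move: {2}(n - gap j a b) (leqnn (n - gap j a b)) => d.
elim: d j a b => [|d IHd] j a b d_ge pair n_ge; first lia.
case: (leqP n (gap j a b + nblocks (lens j))) => n_le.
  have -> : n = gap j a b + (n - gap j a b - 1) + 1 by lia.
  by apply: gap_realized_blocks pair _; lia.
have [a' [b' [pair' gap_lt gap_le]]] := pair_over_next pair.
by apply: IHd pair' _; lia.
Qed.

Theorem lemma3p5 :
  forall U V : point -> Prop,
    openX U -> openX V -> (exists x, U x) -> (exists y, V y) ->
    exists N, forall n, N <= n ->
      exists x y, U x /\ V y /\ Tpow n x y.
Proof.
move=> U V [XU openU] [XV openV] [x Ux] [y Vy].
have [kU nearU] := openU x Ux; have [kV nearV] := openV y Vy.
pose K := (maxn kU kV).+1; have K_gt0 : 0 < K by [].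
have [a a_le Pa] := mem_Ppath1 K_gt0 (XU x Ux K).1.
have [b b_le Pb] := mem_Ppath1 K_gt0 (XV y Vy K).1.
have pair : pair_over K (x K) (y K) K.+1 a b.
  by split; rewrite // imgS // subnn.
exists (gap K.+1 a b + 2) => n n_ge.
have [M [q [KM qn_le img_q img_qn]]] := gap_realized_from pair n_ge.
have M_gt0 : 0 < M by lia.
have pt_K p : pt M p K = img K M p by rewrite /pt ifN // -ltnNge.
exists (pt M q), (pt M (q + n)); split; [|split]; last exact: Tpow_pt.
- apply: nearU => [|i i_le]; first by apply: inX_pt; lia.
  by apply: (inX_eq_le (K := K) (inX_pt _ _) (XU x Ux)); rewrite ?pt_K //; lia.
- apply: nearV => [|i i_le]; first by apply: inX_pt.
  by apply: (inX_eq_le (K := K) (inX_pt _ _) (XV y Vy)); rewrite ?pt_K //; lia.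
Qed.
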